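(* A space in the category $\mathsf{Top}_1$ of T$_1$-spaces and continuous maps is finitely generated (as an object of $\mathsf{Top}_1$) if, and only if, it is finite.
   Context: An object $X$ of a category $\mathcal{C}$ is finitely generated if for every directed diagram $(Z_i)_{i\in I}$ in $\mathcal{C}$ (indexed by a directed poset, i.e. every finite subset has an upper bound) all of whose connecting morphisms $z_{i,j}$ are monomorphisms, with colimit cocone $c_i:Z_i\to Z$ in $\mathcal{C}$, every morphism $f:X\to Z$ factorizes as $f=c_i\cdot g$ for some $i$ and $g:X\to Z_i$, and if also $f=c_i\cdot g'$ then $z_{i,j}\cdot g=z_{i,j}\cdot g'$ for some connecting morphism $z_{i,j}$. *)

From HB Require Import structures.
From mathcomp Require Import all_boot all_order.
From mathcomp Require Import all_classical topology.
Set Implicit Arguments. Unset Strict Implicit. Unset Printing Implicit Defensive.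
Local Open Scope classical_set_scope.

Definition T1space (T : topologicalType) : Prop := accessible_space T.

Definition directed_poset (I : Type) (le : I -> I -> Prop) : Prop :=
  [/\ (forall i, le i i),
      (forall i j k, le i j -> le j k -> le i k),
      (forall i j, le i j -> le j i -> i = j) &
      (forall F : set I, finite_set F -> exists u, forall i, F i -> le i u)].

Definition mono_Top1 (A B : topologicalType) (m : A -> B) : Prop :=
  forall (W : topologicalType) (g h : W -> A), T1space W ->
    continuous g -> continuous h -> m \o g = m \o h -> g = h.

Definition mono_directed_diagram (I : Type) (le : I -> I -> Prop)
  (Z : I -> topologicalType) (z : forall i j, le i j -> Z i -> Z j) : Prop :=
  directed_poset le /\ (forall i, T1space (Z i)) /\
  [/\
      (forall i j (h : le i j), continuous (z i j h)),
      (forall i (h : le i i), z i i h = id),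
      (forall i j k (hij : le i j) (hjk : le j k) (hik : le i k),
          z i k hik = z j k hjk \o z i j hij) &
      (forall i j (h : le i j), mono_Top1 (z i j h))].

Definition cocone (I : Type) (le : I -> I -> Prop)
  (Z : I -> topologicalType) (z : forall i j, le i j -> Z i -> Z j)
  (W : topologicalType) (d : forall i, Z i -> W) : Prop :=
  (forall i, continuous (d i)) /\
  (forall i j (h : le i j), d j \o z i j h = d i).

Definition colimit_Top1 (I : Type) (le : I -> I -> Prop)
  (Z : I -> topologicalType) (z : forall i j, le i j -> Z i -> Z j)
  (C : topologicalType) (c : forall i, Z i -> C) : Prop :=
  [/\ T1space C, cocone z c &
      forall (W : topologicalType) (d : forall i, Z i -> W),
        T1space W -> cocone z d ->
        exists u : C -> W, [/\ continuous u, (forall i, u \o c i = d i) &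
          forall v : C -> W, continuous v -> (forall i, v \o c i = d i) -> v = u]].

Definition finitely_generated_Top1 (X : topologicalType) : Prop :=
  forall (I : Type) (le : I -> I -> Prop) (Z : I -> topologicalType)
         (z : forall i j, le i j -> Z i -> Z j)
         (C : topologicalType) (c : forall i, Z i -> C),
    mono_directed_diagram z -> colimit_Top1 z c ->
    forall f : X -> C, continuous f ->
      (exists i (g : X -> Z i), continuous g /\ f = c i \o g) /\
      (forall i (g g' : X -> Z i), continuous g -> continuous g' ->
          f = c i \o g -> f = c i \o g' ->
          exists j (h : le i j), z i j h \o g = z i j h \o g').

From HB Require Import structures.
From mathcomp Require Import all_boot all_order.
From mathcomp Require Import all_classical topology.
Set Implicit Arguments. Unset Strict Implicit. Unset Printing Implicit Defensive.
Local Open Scope classical_set_scope.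

(* An injection from a T1 space into a set carrying the cofinite topology is
   continuous, and every T1 topology on a finite set is discrete. Testing the
   universal property against cofinite topologies shows that a colimit of a
   mono-directed diagram in Top_1 is, as a set, the union of the stages along
   injective legs; so a map from a finite T1 space factors through one stage.
   Conversely, embed nat * nat into an infinite X and let the stages be the
   sets S with only finitely many infinite columns, each with the cofinite
   topology. Every infinite set contains an infinite such S, which forces the
   colimit topology on X to be cofinite; the continuous identity of X into it
   would then factor through one stage S, i.e. S = X, which has infinitely many
   infinite columns. *)

Definition cofinite_topology (T : Type) : Type := T.
HB.instance Definition _ T := gen_eqMixin (cofinite_topology T).
HB.instance Definition _ T := gen_choiceMixin (cofinite_topology T).

Definition cofinite_open T : set_system (cofinite_topology T) :=
  fun U => U = set0 \/ finite_set (~` U).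

Lemma cofinite_openT T : cofinite_open [set: cofinite_topology T].
Proof. by right; rewrite setCT; exact: finite_set0. Qed.

Lemma cofinite_openI T : setI_closed (@cofinite_open T).
Proof.
move=> U V [->|finUc]; first by left; rewrite set0I.
move=> [->|finVc]; first by left; rewrite setI0.
by right; rewrite setCI finite_setU.
Qed.

Lemma cofinite_open_bigcup T (I : Type) (U : I -> set (cofinite_topology T)) :
  (forall i, cofinite_open (U i)) -> cofinite_open (\bigcup_i U i).
Proof.
move=> oU; have [[i [x Uix]]|U0] := pselect (exists i, U i !=set0); last first.
  by left; apply/seteqP; split=> // x [i _ Uix]; apply: U0; exists i, x.
case: (oU i) => [Ui0|finUic]; first by move: Uix; rewrite Ui0.
by right; apply: sub_finite_set finUic => y + Uiy; apply; exists i.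
Qed.

HB.instance Definition _ T := isOpenTopological.Build (cofinite_topology T)
  (@cofinite_openT T) (@cofinite_openI T) (@cofinite_open_bigcup T).

Lemma cofinite_closed T (A : set (cofinite_topology T)) :
  closed A -> A = setT \/ finite_set A.
Proof.
rewrite -openC => -[Ac0|]; last by rewrite setCK; right.
by left; rewrite -(setCK A) Ac0 setC0.
Qed.

Lemma cofinite_T1 T : T1space (cofinite_topology T).
Proof.
apply/accessible_finite_set_closed => A finA.
by rewrite -openC; right; rewrite setCK.
Qed.

Lemma cofinite_sub_closed_trace T (S A : set T) :
  closed [set s : cofinite_topology {x | S x} | A (sval s)] ->
  finite_set (A `&` S) \/ S `<=` A.
Proof.
case/cofinite_closed=> [AT|finA]; last first.
  left; apply: sub_finite_set (finite_image sval finA) => x [Ax Sx].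
  by exists (exist _ x Sx).
by right=> x Sx; have : [set s | A (sval s)] (exist S x Sx) by rewrite AT.
Qed.

(* Preimages of finite sets under injections are finite, hence closed in a T1 space. *)
Lemma continuous_inj_cofinite (A : topologicalType) T (f : A -> cofinite_topology T) :
  T1space A -> injective f -> continuous f.
Proof.
move=> A_T1 f_inj; apply/continuousP => U [->|finUc].
  by rewrite preimage_set0; exact: open0.
rewrite -(setCK (f @^-1` U)) openC preimage_setC.
apply: (proj1 accessible_finite_set_closed A_T1).
by apply: finite_preimage => // x y _ _; exact: f_inj.
Qed.

Lemma finite_T1_continuous (X Y : topologicalType) (g : X -> Y) :
  T1space X -> finite_set [set: X] -> continuous g.
Proof.
move=> X_T1 finX; apply/continuousP => U _.
rewrite -(setCK (g @^-1` U)) openC.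
by apply: (proj1 accessible_finite_set_closed X_T1); exact: sub_finite_set finX.
Qed.

Lemma mono_Top1_inj (A B : topologicalType) (m : A -> B) :
  mono_Top1 m -> injective m.
Proof.
move=> m_mono a b mab.
have cst_cont (x : A) : continuous (fun _ : cofinite_topology unit => x).
  by move=> ?; exact: cst_continuous.
have ab : (fun _ : cofinite_topology unit => a) = (fun _ => b).
  apply: (m_mono _ _ _ (@cofinite_T1 unit) (cst_cont a) (cst_cont b)).
  by apply: funext => _ /=; rewrite mab.
exact: (congr1 (@^~ tt) ab).
Qed.

Lemma inj_mono_Top1 (A B : topologicalType) (m : A -> B) :
  injective m -> mono_Top1 m.
Proof.
move=> m_inj W g h _ _ _ mgh; apply: funext => w; apply: m_inj.
exact: (congr1 (@^~ w) mgh).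
Qed.

Section MonoDirectedColimit.
Variables (I : Type) (le : I -> I -> Prop) (Z : I -> topologicalType).
Variable z : forall i j, le i j -> Z i -> Z j.
Variables (C : topologicalType) (c : forall i, Z i -> C).
Hypothesis z_diagram : mono_directed_diagram z.
Hypothesis c_colimit : colimit_Top1 z c.

Let diag_le_refl i : le i i.
Proof. by case: z_diagram => -[]. Qed.

Let diag_le_trans i j k : le i j -> le j k -> le i k.
Proof. by case: z_diagram => -[_ trans _ _] _; exact: trans. Qed.

Let Z_T1 i : T1space (Z i).
Proof. by case: z_diagram => _ []. Qed.

Let diag_ub2 i j : exists k, le i k /\ le j k.
Proof.
case: z_diagram => -[_ _ _ ub] _; have [k hk] := ub _ (finite_set2 i j).
by exists k; split; apply: hk; [left|right].
Qed.

Let z_inj i j (h : le i j) : injective (z h).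
Proof. by case: z_diagram => _ [_ [_ _ _ z_mono]]; exact: mono_Top1_inj. Qed.

Let z_comp i j k (hij : le i j) (hjk : le j k) (hik : le i k) x :
  z hjk (z hij x) = z hik x.
Proof. by case: z_diagram => _ [_ [_ _ zc _]]; rewrite (zc _ _ _ hij hjk hik). Qed.

(* If p is missed, both [Some] and the map sending p to [None] mediate the
   cocone [Some \o c]. *)
Lemma colimit_Top1_cover (p : C) : exists i (a : Z i), c a = p.
Proof.
apply: contrapT => p_new; case: c_colimit => C_T1 [c_cont c_comp] c_univ.
pose W := cofinite_topology (option C).
have Some_cont : continuous (Some : C -> W).
  by apply: continuous_inj_cofinite => // x y [].
have d_cocone : cocone z (fun i a => Some (c a) : W).
  split=> [i x|i j h]; first exact: continuous_comp (c_cont i x) (Some_cont _).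
  by apply: funext => a /=; rewrite -(c_comp i j h).
have [u [_ _ u_uniq]] := c_univ W _ (@cofinite_T1 _) d_cocone.
pose v (y : C) : W := if y == p then None else Some y.
have v_cont : continuous v.
  apply: continuous_inj_cofinite => // x y; rewrite /v.
  by case: eqP => [->|_]; case: eqP => [->|_] // [].
have : v = Some :> (C -> W).
  rewrite (u_uniq _ Some_cont (fun i => erefl)); apply: u_uniq => // i.
  apply: funext => a /=; rewrite /v; case: eqP => // cap.
  by case: p_new; exists i, a.
by move=> /(congr1 (@^~ p)); rewrite /v eqxx.
Qed.

(* The class of w in the colimit of the underlying sets. *)
Definition germ j (w : Z j) : cofinite_topology (set {k & Z k}) :=
  fun p => exists m (hj : le j m) (hp : le (projT1 p) m),
    z hj w = z hp (projT2 p).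

Lemma germ_inj j : injective (@germ j).
Proof.
move=> w w' ww'.
have : germ w' (existT _ j w') by exists j, (diag_le_refl j), (diag_le_refl j).
rewrite -ww' => -[m [h1 [h2 /=]]].
by rewrite (Prop_irrelevance h1 h2) => /z_inj.
Qed.

Lemma germ_comp j k (h : le j k) w : germ (z h w) = germ w.
Proof.
apply: funext => -[l x]; apply: propext; split=> /= -[m [hk [hl zwx]]].
  exists m, (diag_le_trans h hk), hl.
  by rewrite -(z_comp h hk).
have [M [hkM hmM]] := diag_ub2 k m.
exists M, hkM, (diag_le_trans hl hmM).
rewrite (z_comp h hkM (diag_le_trans hk hmM)) -(z_comp hk hmM) zwx.
exact: z_comp.
Qed.

Lemma colimit_Top1_inj i : injective (@c i).
Proof.
move=> a b cab; case: c_colimit => _ _ c_univ.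
have germ_cocone : cocone z germ.
  split=> [j|j k h]; last by apply: funext => w; exact: germ_comp.
  exact: continuous_inj_cofinite (@germ_inj j).
have [u [_ u_comp _]] := c_univ _ germ (@cofinite_T1 _) germ_cocone.
by apply: (@germ_inj i); rewrite -(u_comp i) /= cab.
Qed.

End MonoDirectedColimit.

Lemma finite_finitely_generated_Top1 (X : topologicalType) :
  T1space X -> finite_set [set: X] -> finitely_generated_Top1 X.
Proof.
move=> X_T1 finX I le Z z C c z_diagram c_colimit f _.
have [[le_refl _ _ ub] _] := z_diagram; have [_ [_ c_comp] _] := c_colimit.
split=> [|i g g' _ _ -> cgg']; last first.
  exists i, (le_refl i); apply: funext => x /=; congr z.
  exact: (colimit_Top1_inj z_diagram c_colimit (congr1 (@^~ x) cgg')).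
have /choice [a ca] : forall x, exists a : {i & Z i}, c _ (projT2 a) = f x.
  move=> x; have [i [b cb]] := colimit_Top1_cover c_colimit (f x).
  by exists (existT _ i b).
have [M leM] := ub _ (finite_image (fun x => projT1 (a x)) finX).
have leaM x : le (projT1 (a x)) M by apply: leM; exists x.
exists M, (fun x => z _ _ (leaM x) (projT2 (a x))); split.
  exact: finite_T1_continuous.
apply: funext => x /=.
by rewrite -ca -(congr1 (@^~ (projT2 (a x))) (c_comp _ _ (leaM x))).
Qed.

Section IdealDiagram.
Variables (X : topologicalType) (J : set (set X)).
Hypothesis J_set1 : forall x, J [set x].
Hypothesis J_bigcup : forall F, finite_set F -> F `<=` J -> J (\bigcup_(S in F) S).
Hypothesis J_infinite_sub :
  forall K, infinite_set K -> exists2 S, J S & S `<=` K /\ infinite_set S.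

Lemma ideal_trace_finite_or_full (A : set X) :
  (forall S, J S -> finite_set (A `&` S) \/ S `<=` A) -> finite_set A \/ A = setT.
Proof.
move=> A_trace; apply: contrapT => /not_orP [infA AnT].
have [x0 Ax0] : exists x0, ~ A x0.
  apply: contrapT => AT; apply: AnT; apply/seteqP; split=> // x _.
  by apply: contrapT => Ax; apply: AT; exists x.
have [S JS [SA infS]] := J_infinite_sub infA.
pose S' := \bigcup_(B in [set S; [set x0]]) B.
have JS' : J S' by apply: J_bigcup => // B [->|->].
case: (A_trace S' JS') => [finAS'|S'A]; last first.
  by apply: Ax0; apply: S'A; exists [set x0]; [right|].
apply: infS; apply: sub_finite_set finAS' => x Sx.
by split; [apply: SA|exists S; [left|]].
Qed.

Definition ideal_index := {S : set X | J S}.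
Definition ideal_le (S T : ideal_index) := sval S `<=` sval T.
Definition ideal_space (S : ideal_index) : topologicalType :=
  cofinite_topology {x : X | sval S x}.
Definition ideal_incl S T (h : ideal_le S T) : ideal_space S -> ideal_space T :=
  fun s => exist _ (sval s) (h _ (svalP s)).
Definition ideal_val S : ideal_space S -> cofinite_topology X := fun s => sval s.

Lemma ideal_incl_inj S T (h : ideal_le S T) : injective (ideal_incl h).
Proof. by move=> [x ?] [y ?] [xy]; exact: eq_exist. Qed.

Lemma ideal_diagram : mono_directed_diagram ideal_incl.
Proof.
split; [split|split; first by move=> S; exact: cofinite_T1].
- by move=> S x.
- by move=> S T U ST TU x /ST /TU.
- by move=> [S ?] [T ?] ST TS; apply: eq_exist; apply/seteqP.
- move=> F finF.
  have FJ : sval @` F `<=` J by move=> _ [S _ <-]; exact: svalP.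
  exists (exist _ _ (J_bigcup (finite_image sval finF) FJ)).
  by move=> S FS x Sx; exists (sval S) => //; exists S.
split=> [S T h|S h|S T U ST TU SU|S T h].
- by apply: continuous_inj_cofinite; [exact: cofinite_T1|exact: ideal_incl_inj].
- by apply: funext => -[x ?]; exact: eq_exist.
- by apply: funext => -[x ?]; exact: eq_exist.
- exact/inj_mono_Top1/ideal_incl_inj.
Qed.

Definition ideal_point (x : X) : ideal_index := exist _ [set x] (J_set1 x).

Lemma ideal_colimit : colimit_Top1 ideal_incl ideal_val.
Proof.
split; [exact: cofinite_T1|split=> [S|S T h]; last exact: funext|].
  apply: continuous_inj_cofinite; first exact: cofinite_T1.
  by move=> [x ?] [y ?] /= xy; exact: eq_exist.
move=> W d W_T1 [d_cont d_comp].
pose u (x : cofinite_topology X) : W := d (ideal_point x) (exist _ x erefl).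
have u_comp S : u \o @ideal_val S = d S.
  apply: funext => -[x Sx]; have le_xS : ideal_le (ideal_point x) S by move=> y ->.
  rewrite /= /u -(d_comp _ _ le_xS) /=; congr (d S _); exact: eq_exist.
exists u; split=> // [|v _ v_comp]; last first.
  by apply: funext => x; rewrite /u -(v_comp (ideal_point x)).
apply/continuousP => U oU.
have [|finUc|Uc_full] := @ideal_trace_finite_or_full (~` (u @^-1` U)).
- move=> S JS; apply: cofinite_sub_closed_trace.
  have -> : [set s : cofinite_topology {x | S x} | (~` (u @^-1` U)) (sval s)] =
      d (exist _ S JS) @^-1` (~` U).
    by apply/seteqP; split=> s /=; rewrite -(u_comp (exist _ S JS)).
  by apply: closed_comp => [s _|]; [exact: d_cont|exact: open_closedC].
- by right.
- by left; rewrite -[_ @^-1` _]setCK Uc_full setCT.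
Qed.

Lemma ideal_not_finitely_generated :
  T1space X -> ~ J setT -> ~ finitely_generated_Top1 X.
Proof.
move=> X_T1 JnT fgX.
have id_cont : continuous (id : X -> cofinite_topology X).
  exact: continuous_inj_cofinite.
have [[S [g [_ idg]]] _] := fgX _ _ _ _ _ _ ideal_diagram ideal_colimit _ id_cont.
apply: JnT; suff -> : setT = sval S by exact: svalP.
by apply/seteqP; split=> // x _; rewrite (congr1 (@^~ x) idg); exact: svalP.
Qed.

End IdealDiagram.

Section ColumnFinite.
Variables (T : Type) (e : nat * nat -> T).

Definition column (S : set T) (a : nat) : set nat := [set b | S (e (a, b))].

Definition column_finite (S : set T) : Prop :=
  finite_set [set a | infinite_set (column S a)].

Lemma column_finiteW (S : set T) :
  (forall a, finite_set (column S a)) -> column_finite S.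
Proof.
move=> finS; rewrite /column_finite.
suff -> : [set a | infinite_set (column S a)] = set0 by exact: finite_set0.
by apply/seteqP; split=> // a /=; apply.
Qed.

Lemma column_finiteNT : ~ column_finite setT.
Proof.
rewrite /column_finite.
suff -> : [set a | infinite_set (column setT a)] = setT by exact: infinite_nat.
by apply/seteqP; split=> // a _; exact: infinite_nat.
Qed.

Lemma column_finite_bigcup (F : set (set T)) :
  finite_set F -> F `<=` column_finite -> column_finite (\bigcup_(S in F) S).
Proof.
move=> finF Fcf; apply: sub_finite_set (bigcup_finite finF Fcf) => a /= infFa.
apply: contrapT => finSa; apply: infFa.
have -> : column (\bigcup_(S in F) S) a = \bigcup_(S in F) column S a by [].
by apply: bigcup_finite => // S FS; apply: contrapT => infSa; apply: finSa; exists S.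
Qed.

Hypothesis e_inj : injective e.

Lemma column_finite_set1 x : column_finite [set x].
Proof.
apply: column_finiteW => a.
by apply: finite_preimage (finite_set1 x) => b b' _ _ /e_inj [].
Qed.

Lemma column_finite_infinite_sub (K : set T) : infinite_set K ->
  exists2 S, column_finite S & S `<=` K /\ infinite_set S.
Proof.
move=> infK; have [[a0 infKa0]|finK] := pselect (exists a, infinite_set (column K a)).
  pose ea0 b := e (a0, b).
  have ea0_inj : injective ea0 by move=> b b' /e_inj [].
  exists (ea0 @` column K a0); last split.
  - apply: sub_finite_set (finite_set1 a0) => a /= infa; apply: contrapT => aa0.
    apply: infa; suff -> : column (ea0 @` column K a0) a = set0 by exact: finite_set0.
    by apply/seteqP; split=> // b /= [b' _ /e_inj [a0a]]; case: aa0.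
  - by move=> _ [b Kb <-].
  - move=> finS; apply: infKa0.
    apply: sub_finite_set (finite_preimage (fun b b' _ _ => @ea0_inj b b') finS).
    by move=> b Kb; exists b.
exists K; last by split.
apply: column_finiteW => a.
by apply: contrapT => infa; apply: finK; exists a.
Qed.

End ColumnFinite.

Lemma infinite_inj_prod_nat (T : Type) :
  infinite_set [set: T] -> exists e : nat * nat -> T, injective e.
Proof.
elim/Ppointed: T => T; first by rewrite emptyE => /(_ (finite_set0 _)).
move=> /infiniteP /pcard_injP [f f_inj].
exists (f \o pickle) => p q /f_inj; rewrite !in_setT => /(_ isT isT).
exact: (pcan_inj (@pickleK _)).
Qed.

Theorem theorem6p6 (X : topologicalType) :
  T1space X ->
  (finitely_generated_Top1 X <-> finite_set [set: X]).
Proof.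
move=> X_T1; split; last exact: finite_finitely_generated_Top1.
move=> fgX; apply: contrapT => infX.
have [e e_inj] := infinite_inj_prod_nat infX.
apply: (ideal_not_finitely_generated (J := column_finite e)) => //.
- exact: column_finite_set1.
- exact: column_finite_bigcup.
- exact: column_finite_infinite_sub.
- exact: column_finiteNT.
Qed.
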